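(* Let $G=(V,E)$ be an $r$-rank connected graph and let $X,Y\subseteq V$ be $r$-splits of $G$ with $|X\cap Y|\ge r$. Then $X\cup Y$ is an $r$-split of $G$.
   Context: For $X\subseteq V$, $\overline X=V\setminus X$, and $\rho(X)$ is the rank over $\mathbb F_2$ of the submatrix of the adjacency matrix of $G$ with rows indexed by $X$ and columns by $\overline X$. $X$ is a $k$-split if $\rho(X)\le k$, and trivial if $\rho(X)=\min(|X|,|\overline X|)$. $G$ is $r$-rank connected if every $k$-split with $k<r$ is trivial. *)

From HB Require Import structures.
From mathcomp Require Import all_boot all_order all_algebra.
Set Implicit Arguments. Unset Strict Implicit. Unset Printing Implicit Defensive.
Import GRing.Theory.
Local Open Scope ring_scope.

Definition simple_graph (V : finType) (adj : rel V) : Prop :=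
  symmetric adj /\ irreflexive adj.

Definition cut_matrix (V : finType) (adj : rel V) (X : {set V})
  : 'M['F_2]_(#|X|, #|~: X|) :=
  \matrix_(i < #|X|, j < #|~: X|) (adj (enum_val i) (enum_val j))%:R.

Definition cutrank (V : finType) (adj : rel V) (X : {set V}) : nat :=
  \rank (cut_matrix adj X).

Definition is_split (V : finType) (adj : rel V) (k : nat) (X : {set V}) : Prop :=
  (cutrank adj X <= k)%N.

Definition trivial_split (V : finType) (adj : rel V) (X : {set V}) : Prop :=
  cutrank adj X = minn #|X| #|~: X|.

Definition rank_connected (V : finType) (adj : rel V) (r : nat) : Prop :=
  forall (k : nat) (X : {set V}), (k < r)%N -> is_split adj k X -> trivial_split adj X.

From mathcomp Require Import all_boot all_order all_algebra.
From mathcomp Require Import zify.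
Set Implicit Arguments. Unset Strict Implicit. Unset Printing Implicit Defensive.
Import GRing.Theory.
Local Open Scope ring_scope.

(* Cut-rank is submodular. Indeed rho(X) + |X| is the dimension of the span of
   the unit vectors e_x and the adjacency rows a_x for x in X (projecting away
   the X-coordinates leaves exactly the rows of the cut matrix), and
   span(X u Y) <= span X + span Y, span(X n Y) <= span X n span Y, so the
   dimension formula for sums and intersections of subspaces gives
   rho(X u Y) + rho(X n Y) <= rho(X) + rho(Y).
   Hence if rho(X u Y) > r, then rho(X n Y) < r and X n Y is a trivial split;
   since |X n Y| >= r > rho(X n Y), this forces
   rho(X n Y) = |V \ (X n Y)| >= |V \ (X u Y)| >= rho(X u Y) > r,
   a contradiction. *)

Section CutRank.

Variables (F : fieldType) (V : finType) (a : V -> V -> F).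

Definition cut_mx (X : {set V}) : 'M[F]_(#|X|, #|~: X|) :=
  \matrix_(i, j) a (enum_val i) (enum_val j).

Definition cut_rank (X : {set V}) : nat := \rank (cut_mx X).

Definition form_mx : 'M[F]_#|V| := \matrix_(j, k) a (enum_val j) (enum_val k).

Definition unit_row (x : V) : 'rV[F]_#|V| := \row_j (x == enum_val j)%:R.

Definition sel_mx (X : {set V}) : 'M[F]_(#|X|, #|V|) :=
  \matrix_(i, j) (enum_val i == enum_val j)%:R.

Lemma sum_enum_val_eq (A : {pred V}) (x : V) (f : V -> F) :
  \sum_(i < #|A|) (x == enum_val i)%:R * f (enum_val i) = if x \in A then f x else 0.
Proof.
case: ifPn => [xA | xNA].
  rewrite (bigD1 (enum_rank_in xA x)) //= enum_rankK_in // eqxx mul1r.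
  rewrite big1 ?addr0 // => i ne_i; case: eqP => [x_i|]; last by rewrite mul0r.
  by case/eqP: ne_i; apply: enum_val_inj; rewrite enum_rankK_in.
rewrite big1 // => i _; case: eqP => [x_i|]; last by rewrite mul0r.
by move: xNA; rewrite x_i enum_valP.
Qed.

Lemma sel_mx_formE X i k : (sel_mx X *m form_mx) i k = a (enum_val i) (enum_val k).
Proof.
rewrite mxE; under eq_bigr do rewrite !mxE.
by rewrite (sum_enum_val_eq _ _ (a^~ (enum_val k))) inE.
Qed.

Lemma sel_mx_trE X Y i l :
  (sel_mx X *m (sel_mx Y)^T) i l = (enum_val i == enum_val l :> V)%:R.
Proof.
rewrite mxE; under eq_bigr do rewrite !mxE mulrC.
by rewrite (sum_enum_val_eq _ _ (fun v => (enum_val i == v)%:R)) inE.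
Qed.

Lemma cut_mxE X : cut_mx X = sel_mx X *m form_mx *m (sel_mx (~: X))^T.
Proof.
apply/matrixP => i l; rewrite !mxE; under eq_bigr do rewrite sel_mx_formE !mxE mulrC.
by rewrite (sum_enum_val_eq _ _ (a (enum_val i))) inE.
Qed.

Lemma sel_mx_trK X : sel_mx X *m (sel_mx X)^T = 1%:M.
Proof. by apply/matrixP => i l; rewrite sel_mx_trE (inj_eq enum_val_inj) !mxE. Qed.

Lemma sel_mx_tr_compl X : sel_mx X *m (sel_mx (~: X))^T = 0.
Proof.
apply/matrixP => i l; rewrite sel_mx_trE mxE.
by case: eqP => // Eil; have := enum_valP l; rewrite -Eil inE enum_valP.
Qed.

Lemma sel_mx_partition X :
  (sel_mx X)^T *m sel_mx X + (sel_mx (~: X))^T *m sel_mx (~: X) = 1%:M.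
Proof.
apply/matrixP => j k; rewrite !mxE.
have sel_sum Z : \sum_i (sel_mx Z)^T j i * sel_mx Z i k
               = if enum_val j \in Z then (j == k)%:R else 0.
  under eq_bigr do rewrite !mxE eq_sym.
  by rewrite (sum_enum_val_eq _ _ (fun v => (v == enum_val k)%:R)) (inj_eq enum_val_inj).
by rewrite !sel_sum inE; case: ifP; rewrite ?addr0 ?add0r.
Qed.

Lemma mxrank_sel_mx X : \rank (sel_mx X) = #|X|.
Proof.
apply/eqP; rewrite eqn_leq rank_leq_row /=.
by rewrite -{1}(mxrank1 F #|X|) -(sel_mx_trK X) mxrankM_maxl.
Qed.

Lemma mxrank_cut_sel X : \rank (cut_mx X *m sel_mx (~: X)) = cut_rank X.
Proof. by rewrite mxrankMfree // /row_free mxrank_sel_mx. Qed.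

Lemma sel_cap_cut_sel X : (sel_mx X :&: cut_mx X *m sel_mx (~: X))%MS = 0.
Proof.
set W := (_ :&: _)%MS.
have /submxP [D1 W_sel] : (W <= sel_mx X)%MS by apply: capmxSl.
have /submxP [D2 W_cut] : (W <= cut_mx X *m sel_mx (~: X))%MS by apply: capmxSr.
have -> : W = W *m (sel_mx (~: X))^T *m sel_mx (~: X).
  by rewrite {2}W_cut -!mulmxA (mulmxA (sel_mx _)) sel_mx_trK mul1mx.
by rewrite {1}W_sel -(mulmxA D1) sel_mx_tr_compl mulmx0 mul0mx.
Qed.

Definition span_mx (X : {set V}) := (sel_mx X + sel_mx X *m form_mx)%MS.

Lemma span_mx_cut X : (span_mx X :=: sel_mx X + cut_mx X *m sel_mx (~: X))%MS.
Proof.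
rewrite /span_mx; pose C := sel_mx X *m form_mx *m (sel_mx X)^T.
have -> : sel_mx X *m form_mx = C *m sel_mx X + cut_mx X *m sel_mx (~: X).
  by rewrite cut_mxE -!mulmxA -mulmxDr -mulmxDr sel_mx_partition mulmx1.
exact: addsmx_addKl (submxMl _ _).
Qed.

Lemma mxrank_span_mx X : \rank (span_mx X) = (#|X| + cut_rank X)%N.
Proof.
by rewrite span_mx_cut mxrank_disjoint_sum ?sel_cap_cut_sel
  // mxrank_sel_mx mxrank_cut_sel.
Qed.

Lemma row_sel_mx X i : row i (sel_mx X) = unit_row (enum_val i).
Proof. by apply/rowP => j; rewrite !mxE. Qed.

Lemma span_mx_subP (X : {set V}) m (W : 'M_(m, #|V|)) :
  reflect (forall x, x \in X -> (unit_row x <= W)%MS && (unit_row x *m form_mx <= W)%MS)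
          (span_mx X <= W)%MS.
Proof.
apply: (iffP idP) => [spanW x xX | unitW].
  have -> : unit_row x = row (enum_rank_in xX x) (sel_mx X).
    by rewrite row_sel_mx enum_rankK_in.
  move: spanW; rewrite addsmx_sub => /andP[selW selAW].
  by rewrite -row_mul !(submx_trans (row_sub _ _)).
rewrite addsmx_sub; apply/andP; split; apply/row_subP => i.
  by rewrite row_sel_mx; case/andP: (unitW _ (enum_valP i)).
by rewrite row_mul row_sel_mx; case/andP: (unitW _ (enum_valP i)).
Qed.

Lemma cut_rank_submod X Y :
  (cut_rank (X :|: Y) + cut_rank (X :&: Y) <= cut_rank X + cut_rank Y)%N.
Proof.
have spanP (Z : {set V}) z : z \in Z ->
    (unit_row z <= span_mx Z)%MS && (unit_row z *m form_mx <= span_mx Z)%MS.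
  exact/span_mx_subP.
have sub_sum : (span_mx (X :|: Y) <= span_mx X + span_mx Y)%MS.
  apply/span_mx_subP => z /setUP[] /spanP/andP[z1 z2];
  by rewrite ?(submx_trans z1) ?(submx_trans z2) ?addsmxSl ?addsmxSr.
have sub_cap : (span_mx (X :&: Y) <= span_mx X :&: span_mx Y)%MS.
  apply/span_mx_subP => z /setIP[/spanP/andP[zX1 zX2] /spanP/andP[zY1 zY2]].
  by rewrite !sub_capmx zX1 zX2 zY1 zY2.
have := mxrank_sum_cap (span_mx X) (span_mx Y).
have := mxrankS sub_sum; have := mxrankS sub_cap.
rewrite !mxrank_span_mx; have := cardsUI X Y; lia.
Qed.

End CutRank.

Lemma cutrank_submod (V : finType) (adj : rel V) (X Y : {set V}) :
  (cutrank adj (X :|: Y) + cutrank adj (X :&: Y) <= cutrank adj X + cutrank adj Y)%N.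
Proof. exact: (cut_rank_submod (fun x y => (adj x y)%:R : 'F_2)). Qed.

Lemma cutrank_le_card_compl (V : finType) (adj : rel V) (X : {set V}) :
  (cutrank adj X <= #|~: X|)%N.
Proof. exact: rank_leq_col. Qed.

Theorem mainTheorem6 (V : finType) (adj : rel V) (r : nat) (X Y : {set V}) :
  simple_graph adj ->
  rank_connected adj r ->
  is_split adj r X -> is_split adj r Y ->
  (r <= #|X :&: Y|)%N ->
  is_split adj r (X :|: Y).
Proof.
rewrite /is_split => _ conn splitX splitY r_le_cap.
rewrite leqNgt; apply/negP => big_union.
have small_cap : (cutrank adj (X :&: Y) < r)%N.
  by have := cutrank_submod adj X Y; lia.
have := conn _ _ small_cap (leqnn _); rewrite /trivial_split.
have : (#|~: (X :|: Y)| <= #|~: (X :&: Y)|)%N.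
  by rewrite subset_leq_card // setCS (subset_trans (subsetIl X Y) (subsetUl X Y)).
have := cutrank_le_card_compl adj (X :|: Y).
lia.
Qed.
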